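(* Let $v_1,\dots,v_n$ be distinct real numbers, $s_1,\dots,s_n\in[0,1)$, and $\gamma\in[0,1]$. Then there exist $t\in\mathbb{R}$ and $\alpha\in[0,1]$ such that, for the sector $S=S_{\alpha,\alpha+\gamma}$ of aperture $\gamma$, $$\big|N_S(s_1+v_1t,\dots,s_n+v_nt)-\gamma n\big|\ \ge\ \sqrt{(\gamma-\gamma^2)n}.$$ In particular, there exists $t\in\mathbb{R}$ with $B(s_1+v_1t,\dots,s_n+v_nt)\ge\sqrt n/2$.
   Context: For $r\in\mathbb{R}$, $\{r\}:=r-\lfloor r\rfloor$. For $\alpha\in\mathbb{R}$, $\gamma\in[0,1]$, the sector $S_{\alpha,\alpha+\gamma}:=\{x\in[0,1]:\{x-\alpha\}\le\gamma\}$, of aperture $\gamma$. For a sector $S$ and $x_1,\dots,x_n\in\mathbb{R}$, $N_S(x_1,\dots,x_n):=|\{i:\{x_i\}\in S\}|$. For $r_1,\dots,r_n\in\mathbb{R}$, the bias is $B(r_1,\dots,r_n):=\sup_{0\le a\le b\le1}\big|\,|\{i:\{r_i\}\in[a,b]\}|-n(b-a)\big|$. *)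

From Stdlib Require Import Reals Lra Lia List.
Import ListNotations.
Open Scope R_scope.

(* floor r = up r - 1, since up r is the unique integer with r < up r <= r + 1 *)
Definition floorR (r : R) : R := IZR (up r) - 1.
Definition frac (r : R) : R := r - floorR r.

Definition in_sector (alpha gamma x : R) : bool :=
  if Rle_dec 0 x then
    if Rle_dec x 1 then
      if Rle_dec (frac (x - alpha)) gamma then true else false
    else false
  else false.

Definition N_sector (alpha gamma : R) (x : nat -> R) (n : nat) : nat :=
  length (filter (fun i => in_sector alpha gamma (frac (x i))) (seq 0 n)).

Definition count_in (a b : R) (r : nat -> R) (n : nat) : nat :=
  length (filter (fun i =>
     if Rle_dec a (frac (r i)) then
       if Rle_dec (frac (r i)) b then true else false
     else false) (seq 0 n)).

Definition bias_values (r : nat -> R) (n : nat) (y : R) : Prop :=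
  exists a b, 0 <= a /\ a <= b /\ b <= 1 /\
    y = Rabs (INR (count_in a b r n) - INR n * (b - a)).

Definition is_bias (r : nat -> R) (n : nat) (B : R) : Prop :=
  is_lub (bias_values r n) B.

From Stdlib Require Import Reals Lra Lia List Classical.
From Coquelicot Require Import Coquelicot.
Open Scope R_scope.

(* Second-moment argument.  Let h be the indicator of the sector of aperture g and
   D(alpha) = N_S - g n the deviation of the configuration x_i = s_i + v_i t.  Averaging
   over the rotation alpha, the integral of D^2 is the sum over pairs (i, j) of
   G(x_j - x_i) - g^2, where G(w) is the measure of S ∩ (S - w).  The n diagonal terms
   give (g - g^2) n.  An off-diagonal term is a function of (v_j - v_i) t, and
   G - g^2 is a difference of two translates of a bounded 1-periodic function, so its
   mean over t in [0, T] tends to 0.  Hence for suitable t and alpha, D^2 is almost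
   (g - g^2) n, and exactly so because D takes finitely many values.  For g = 1/2
   either the sector or its complement is an interval, which bounds the bias. *)

Lemma floorR_spec x : floorR x <= x < floorR x + 1.
Proof. unfold floorR; destruct (archimed x); lra. Qed.

Lemma floorR_IZR x : floorR x = IZR (up x - 1).
Proof. unfold floorR; rewrite minus_IZR; reflexivity. Qed.

Lemma floorR_unique x z : IZR z <= x < IZR z + 1 -> floorR x = IZR z.
Proof.
  intros Hx; unfold floorR.
  rewrite <- (tech_up x (z + 1)); rewrite plus_IZR; [ring | lra | lra].
Qed.

Lemma frac_range x : 0 <= frac x < 1.
Proof. unfold frac; destruct (floorR_spec x); lra. Qed.

Lemma frac_cell x z : IZR z <= x < IZR z + 1 -> frac x = x - IZR z.
Proof. intros Hx; unfold frac; rewrite (floorR_unique x z Hx); reflexivity. Qed.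

Lemma frac_id x : 0 <= x < 1 -> frac x = x.
Proof. intros Hx; rewrite (frac_cell x 0); simpl; lra. Qed.

Lemma frac_add_IZR x z : frac (x + IZR z) = frac x.
Proof.
  rewrite (frac_cell _ (up x - 1 + z)).
  - unfold frac; rewrite plus_IZR, <- floorR_IZR; ring.
  - rewrite plus_IZR, <- floorR_IZR; destruct (floorR_spec x); lra.
Qed.

Lemma frac_sub_frac y al : frac (frac y - al) = frac (y - al).
Proof.
  replace (frac y - al) with (y - al + IZR (- (up y - 1))).
  - apply frac_add_IZR.
  - unfold frac; rewrite floorR_IZR, opp_IZR; ring.
Qed.

Lemma frac_sub_unit f al : 0 <= f < 1 -> 0 <= al <= 1 ->
  frac (f - al) = if Rle_dec al f then f - al else f - al + 1.
Proof.
  intros Hf Hal; destruct Rle_dec.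
  - apply frac_id; lra.
  - rewrite (frac_cell _ (-1)); simpl; lra.
Qed.

(* Coquelicot's lemmas are stated for an arbitrary normed module; at [R] their values
   and equations are not recognised by [ring]/[lra] unless specialised. *)
Lemma is_RInt_constR a b c : is_RInt (fun _ => c) a b ((b - a) * c).
Proof. exact (is_RInt_const (V := R_NormedModule) a b c). Qed.

Lemma is_RInt_extR (f g : R -> R) a b l :
  (forall x, Rmin a b < x < Rmax a b -> f x = g x) -> is_RInt f a b l -> is_RInt g a b l.
Proof. exact (is_RInt_ext f g a b l). Qed.

Fixpoint sumR (n : nat) (f : nat -> R) : R :=
  match n with O => 0 | S k => sumR k f + f k end.

Lemma sumR_ext n f g : (forall i, (i < n)%nat -> f i = g i) -> sumR n f = sumR n g.
Proof.
  induction n as [|n IH]; intros Hfg; simpl; [reflexivity|].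
  rewrite IH, Hfg; [reflexivity | lia | intros; apply Hfg; lia].
Qed.

Lemma sumR_minus n f g : sumR n (fun i => f i - g i) = sumR n f - sumR n g.
Proof. induction n as [|n IH]; simpl; [ring | rewrite IH; ring]. Qed.

Lemma sumR_scal n c f : c * sumR n f = sumR n (fun i => c * f i).
Proof. induction n as [|n IH]; simpl; [ring | rewrite <- IH; ring]. Qed.

Lemma sumR_const n c : sumR n (fun _ => c) = c * INR n.
Proof. induction n as [|n IH]; [simpl; ring | rewrite S_INR; simpl sumR; rewrite IH; ring]. Qed.

Lemma sumR_mul n a b : sumR n a * sumR n b = sumR n (fun i => sumR n (fun j => a i * b j)).
Proof.
  rewrite Rmult_comm, sumR_scal; apply sumR_ext; intros i _.
  rewrite Rmult_comm, sumR_scal; reflexivity.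
Qed.

Lemma sumR_delta n i c : (i < n)%nat ->
  sumR n (fun j => if Nat.eq_dec i j then c else 0) = c.
Proof.
  induction n as [|n IH]; intros Hi; simpl; [lia|].
  destruct (Nat.eq_dec i n) as [<- | Hne].
  - rewrite (sumR_ext _ _ (fun _ => 0)), sumR_const; [ring|].
    intros j Hj; destruct Nat.eq_dec; [lia | reflexivity].
  - rewrite IH by lia; ring.
Qed.

Lemma length_filter_sumR (p : nat -> bool) n :
  INR (length (filter p (seq 0 n))) = sumR n (fun i => if p i then 1 else 0).
Proof.
  induction n as [|n IH]; [reflexivity|].
  rewrite seq_S, filter_app, length_app, plus_INR, IH; simpl.
  destruct (p n); simpl; ring.
Qed.

Lemma is_RInt_sumR n (F : nat -> R -> R) (L : nat -> R) a b :
  (forall i, (i < n)%nat -> is_RInt (F i) a b (L i)) ->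
  is_RInt (fun x => sumR n (fun i => F i x)) a b (sumR n L).
Proof.
  induction n as [|n IH]; intros HF.
  - replace (sumR 0 L) with ((b - a) * 0) by (simpl; ring); apply is_RInt_constR.
  - apply (is_RInt_plus (fun x => sumR n (fun i => F i x)) (F n)).
    + apply IH; intros; apply HF; lia.
    + apply HF; lia.
Qed.

Lemma is_RInt_exists_gt (f : R -> R) a b I c :
  a < b -> is_RInt f a b I -> (b - a) * c < I -> exists x, a < x < b /\ c < f x.
Proof.
  intros Hab HI Hc; apply NNPP; intros Hn.
  assert (Hle : forall x, a < x < b -> f x <= c).
  { intros x Hx; apply Rnot_lt_le; intros Hlt; apply Hn; exists x; auto. }
  pose proof (is_RInt_le f (fun _ => c) a b I _ (Rlt_le _ _ Hab) HI (is_RInt_constR a b c) Hle).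
  lra.
Qed.

Lemma is_RInt_periodic (f : R -> R) I :
  (forall u z, f (u + IZR z) = f u) -> is_RInt f 0 1 I -> forall c, is_RInt f c (c + 1) I.
Proof.
  intros Hper HI c.
  set (z := (up c - 1)%Z).
  assert (Hz : IZR z <= c < IZR z + 1) by (unfold z; rewrite <- floorR_IZR; apply floorR_spec).
  set (c' := c - IZR z).
  assert (E1 : ex_RInt f 0 c')
    by (apply (ex_RInt_Chasles_1 f 0 c' 1); [unfold c'; lra | exists I; auto]).
  assert (E2 : ex_RInt f c' 1)
    by (apply (ex_RInt_Chasles_2 f 0 c' 1); [unfold c'; lra | exists I; auto]).
  assert (I1 := RInt_correct f 0 c' E1).
  assert (I2 := RInt_correct f c' 1 E2).
  assert (EI : I = RInt f c' 1 + RInt f 0 c').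
  { rewrite <- (is_RInt_unique f 0 1 I HI), Rplus_comm.
    exact (is_RInt_unique f 0 1 _ (is_RInt_Chasles f 0 c' 1 _ _ I1 I2)). }
  assert (J1 : is_RInt f c (IZR z + 1) (RInt f c' 1)).
  { apply (is_RInt_extR (fun y => 1 * f (1 * y + - IZR z))).
    - intros x _; rewrite !Rmult_1_l, <- opp_IZR, Hper; reflexivity.
    - apply (is_RInt_comp_lin f).
      replace (1 * c + - IZR z) with c' by (unfold c'; ring).
      replace (1 * (IZR z + 1) + - IZR z) with 1 by ring; exact I2. }
  assert (J2 : is_RInt f (IZR z + 1) (c + 1) (RInt f 0 c')).
  { apply (is_RInt_extR (fun y => 1 * f (1 * y + IZR (- (z + 1))))).
    - intros x _; rewrite !Rmult_1_l, Hper; reflexivity.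
    - apply (is_RInt_comp_lin f).
      rewrite opp_IZR, plus_IZR.
      replace (1 * (IZR z + 1) + - (IZR z + 1)) with 0 by ring.
      replace (1 * (c + 1) + - (IZR z + 1)) with c' by (unfold c'; ring); exact I1. }
  rewrite EI; exact (is_RInt_Chasles f _ _ _ _ _ J1 J2).
Qed.

Definition mean_ge (F : R -> R) (d : R) : Prop :=
  exists C, forall T, 0 <= T -> exists I, is_RInt F 0 T I /\ T * d - C <= I.

Lemma mean_ge_const c : mean_ge (fun _ => c) c.
Proof.
  exists 0; intros T _; exists ((T - 0) * c); split; [apply is_RInt_constR | lra].
Qed.

Lemma mean_ge_ext (F G : R -> R) d : (forall t, F t = G t) -> mean_ge F d -> mean_ge G d.
Proof.
  intros HFG [C HC]; exists C; intros T HT.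
  destruct (HC T HT) as [I [HI HIC]]; exists I; split; [|exact HIC].
  apply (is_RInt_ext F); auto.
Qed.

Lemma mean_ge_sumR n (F : nat -> R -> R) (d : nat -> R) :
  (forall i, (i < n)%nat -> mean_ge (F i) (d i)) ->
  mean_ge (fun t => sumR n (fun i => F i t)) (sumR n d).
Proof.
  induction n as [|n IH]; intros HF.
  - apply (mean_ge_ext (fun _ => 0)); [reflexivity | apply mean_ge_const].
  - destruct (IH (fun i Hi => HF i (Nat.lt_lt_succ_r _ _ Hi))) as [C1 H1].
    destruct (HF n (Nat.lt_succ_diag_r n)) as [C2 H2].
    exists (C1 + C2); intros T HT.
    destruct (H1 T HT) as [I1 [HI1 B1]], (H2 T HT) as [I2 [HI2 B2]].
    exists (I1 + I2); split; [|simpl; lra].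
    exact (is_RInt_plus (fun t => sumR n (fun i => F i t)) (F n) 0 T I1 I2 HI1 HI2).
Qed.

Lemma mean_ge_exists_gt F d eps : mean_ge F d -> 0 < eps -> exists t, d - eps < F t.
Proof.
  intros [C HC] Heps.
  set (T := (Rabs C + 1) / eps).
  assert (HTe : T * eps = Rabs C + 1) by (unfold T; field; lra).
  assert (HT : 0 < T) by (unfold T; apply Rdiv_lt_0_compat; [pose proof (Rabs_pos C) |]; lra).
  destruct (HC T (Rlt_le _ _ HT)) as [I [HI HIC]].
  destruct (is_RInt_exists_gt F 0 T I (d - eps) HT HI) as [t [_ Ht]].
  - pose proof (Rle_abs C); nra.
  - exists t; exact Ht.
Qed.

Lemma exists_pos_lower_bound (e : nat -> R) n :
  (forall k, (k <= n)%nat -> 0 < e k) -> exists d, 0 < d /\ forall k, (k <= n)%nat -> d <= e k.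
Proof.
  induction n as [|n IH]; intros He.
  - exists (e O); split; [apply He; lia | intros k Hk; replace k with O by lia; lra].
  - destruct IH as [d [Hd Hle]]; [intros; apply He; lia|].
    exists (Rmin d (e (S n))); split.
    + apply Rmin_pos; [exact Hd | apply He; lia].
    + intros k Hk; destruct (Nat.eq_dec k (S n)) as [-> | Hne]; [apply Rmin_r|].
      eapply Rle_trans; [apply Rmin_l | apply Hle; lia].
Qed.

Lemma exists_ge_of_approx (n : nat) (Q : nat -> Prop) (f : nat -> R) (c : R) :
  (forall k, Q k -> (k <= n)%nat) ->
  (forall eps, 0 < eps -> exists k, Q k /\ c - eps < f k) ->
  exists k, Q k /\ c <= f k.
Proof.
  intros HQ Happ; apply NNPP; intros Hn.
  set (e := fun k => if Rlt_dec (f k) c then c - f k else 1).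
  destruct (exists_pos_lower_bound e n) as [d [Hd Hle]].
  { intros k _; unfold e; destruct Rlt_dec; lra. }
  destruct (Happ d Hd) as [k [Hk Hfk]].
  specialize (Hle k (HQ k Hk)); unfold e in Hle.
  destruct Rlt_dec as [Hlt | Hge]; [lra|].
  apply Hn; exists k; split; [exact Hk | lra].
Qed.

Section Sector.

Variable g : R.
Hypothesis hg : 0 <= g <= 1.

Definition sector_ind (u : R) : R := if Rle_dec (frac u) g then 1 else 0.

(* [sector_mass x] is the integral of [sector_ind] over [0, x]. *)
Definition sector_mass (x : R) : R := g * floorR x + Rmin (frac x) g.

Definition sector_overlap (w : R) : R := sector_mass (w + g) - sector_mass w.

Definition sector_mass_dev (u : R) : R := sector_mass u - g * u.

Lemma sector_ind_add_IZR u z : sector_ind (u + IZR z) = sector_ind u.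
Proof. unfold sector_ind; rewrite frac_add_IZR; reflexivity. Qed.

Lemma sector_ind_sq u : sector_ind u * sector_ind u = sector_ind u.
Proof. unfold sector_ind; destruct Rle_dec; ring. Qed.

Lemma sector_ind_cell z x : IZR z <= x < IZR z + 1 ->
  sector_ind x = if Rle_dec (x - IZR z) g then 1 else 0.
Proof. intros Hx; unfold sector_ind; rewrite (frac_cell x z Hx); reflexivity. Qed.

Lemma sector_mass_cell z x : IZR z <= x <= IZR z + 1 ->
  sector_mass x = g * IZR z + Rmin (x - IZR z) g.
Proof.
  intros Hx; unfold sector_mass; destruct (Rlt_or_le x (IZR z + 1)).
  - unfold frac; rewrite (floorR_unique x z) by lra; reflexivity.
  - unfold frac; rewrite (floorR_unique x (z + 1)); rewrite plus_IZR in *; [|simpl; lra].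
    replace x with (IZR z + 1) by lra.
    rewrite Rmin_left, Rmin_right by (simpl; lra); simpl; ring.
Qed.

Lemma is_RInt_sector_ind_cell z a b : IZR z <= a <= b -> b <= IZR z + 1 ->
  is_RInt sector_ind a b (sector_mass b - sector_mass a).
Proof.
  intros Ha Hb.
  set (m := Rmax a (Rmin b (IZR z + g))).
  assert (Ham : a <= m) by apply Rmax_l.
  assert (Hmb : m <= b) by (apply Rmax_lub; [lra | apply Rmin_l]).
  assert (Hm1 : a < m -> m <= IZR z + g) by (unfold m, Rmax, Rmin; repeat destruct Rle_dec; lra).
  assert (Hm2 : m < b -> IZR z + g <= m) by (unfold m, Rmax, Rmin; repeat destruct Rle_dec; lra).
  assert (I1 : is_RInt sector_ind a m ((m - a) * 1)).
  { apply (is_RInt_extR (fun _ => 1)); [|apply is_RInt_constR].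
    intros x Hx; rewrite Rmin_left, Rmax_right in Hx by lra.
    rewrite (sector_ind_cell z) by lra; destruct Rle_dec; lra. }
  assert (I2 : is_RInt sector_ind m b ((b - m) * 0)).
  { apply (is_RInt_extR (fun _ => 0)); [|apply is_RInt_constR].
    intros x Hx; rewrite Rmin_left, Rmax_right in Hx by lra.
    rewrite (sector_ind_cell z) by lra; destruct Rle_dec; lra. }
  replace (sector_mass b - sector_mass a) with ((m - a) * 1 + (b - m) * 0).
  - exact (is_RInt_Chasles sector_ind a m b _ _ I1 I2).
  - rewrite (sector_mass_cell z a), (sector_mass_cell z b) by lra.
    unfold m, Rmax, Rmin; repeat destruct Rle_dec; lra.
Qed.

Lemma is_RInt_sector_ind_cells k : forall z a b,
  IZR z <= a <= IZR z + 1 -> a <= b -> b <= IZR z + INR (S k) ->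
  is_RInt sector_ind a b (sector_mass b - sector_mass a).
Proof.
  induction k as [|k IH]; intros z a b Ha Hab Hb.
  - apply (is_RInt_sector_ind_cell z); simpl in Hb; lra.
  - rewrite S_INR in Hb.
    destruct (Rle_dec b (IZR z + 1)); [apply (is_RInt_sector_ind_cell z); lra|].
    replace (sector_mass b - sector_mass a)
      with ((sector_mass (IZR z + 1) - sector_mass a) + (sector_mass b - sector_mass (IZR z + 1)))
      by ring.
    apply (is_RInt_Chasles sector_ind a (IZR z + 1) b).
    + apply (is_RInt_sector_ind_cell z); lra.
    + apply (IH (z + 1)%Z); rewrite ?plus_IZR; lra.
Qed.

Lemma is_RInt_sector_ind a b : is_RInt sector_ind a b (sector_mass b - sector_mass a).
Proof.
  assert (Hle : forall a b, a <= b -> is_RInt sector_ind a b (sector_mass b - sector_mass a)).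
  { intros a' b' Hab.
    destruct (INR_archimed 1 (b' - a') Rlt_0_1) as [k Hk].
    apply (is_RInt_sector_ind_cells k (up a' - 1)); rewrite <- ?floorR_IZR;
      destruct (floorR_spec a'); [lra | exact Hab | rewrite S_INR; lra]. }
  destruct (Rle_dec a b); [apply Hle; lra|].
  replace (sector_mass b - sector_mass a) with (- (sector_mass a - sector_mass b)) by ring.
  apply (is_RInt_swap sector_ind); apply Hle; lra.
Qed.

Lemma sector_mass_unit x : 0 <= x <= 1 -> sector_mass x = Rmin x g.
Proof.
  intros Hx; rewrite (sector_mass_cell 0) by lra.
  rewrite Rmult_0_r, Rplus_0_l, Rminus_0_r; reflexivity.
Qed.

Lemma sector_overlap_0 : sector_overlap 0 = g.
Proof.
  unfold sector_overlap; rewrite Rplus_0_l, !sector_mass_unit by lra.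
  unfold Rmin; repeat destruct Rle_dec; lra.
Qed.

Lemma is_RInt_sector_overlap w :
  is_RInt (fun u => sector_ind u * sector_ind (u + w)) 0 1 (sector_overlap w).
Proof.
  assert (Hind : forall u, 0 <= u < 1 -> sector_ind u = if Rle_dec u g then 1 else 0).
  { intros u Hu; rewrite (sector_ind_cell 0) by lra; rewrite Rminus_0_r; reflexivity. }
  assert (I1 : is_RInt (fun u => sector_ind u * sector_ind (u + w)) 0 g (sector_overlap w)).
  { apply (is_RInt_extR (fun u => 1 * sector_ind (1 * u + w))).
    - intros u Hu; rewrite Rmin_left, Rmax_right in Hu by lra.
      rewrite (Hind u) by lra; destruct Rle_dec; [|lra].
      rewrite (Rmult_1_l u); ring.
    - apply (is_RInt_comp_lin sector_ind).
      replace (1 * 0 + w) with w by ring; replace (1 * g + w) with (w + g) by ring.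
      apply is_RInt_sector_ind. }
  assert (I2 : is_RInt (fun u => sector_ind u * sector_ind (u + w)) g 1 ((1 - g) * 0)).
  { apply (is_RInt_extR (fun _ => 0)); [|apply is_RInt_constR].
    intros u Hu; rewrite Rmin_left, Rmax_right in Hu by lra.
    rewrite (Hind u) by lra; destruct Rle_dec; lra. }
  replace (sector_overlap w) with (sector_overlap w + (1 - g) * 0) by ring.
  exact (is_RInt_Chasles _ 0 g 1 _ _ I1 I2).
Qed.

Lemma is_RInt_sector_pair a b :
  is_RInt (fun al => sector_ind (a - al) * sector_ind (b - al)) 0 1 (sector_overlap (b - a)).
Proof.
  set (F := fun u => sector_ind u * sector_ind (u + (b - a))).
  assert (Hper : forall u z, F (u + IZR z) = F u).
  { intros u z; unfold F; replace (u + IZR z + (b - a)) with (u + (b - a) + IZR z) by ring.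
    rewrite !sector_ind_add_IZR; reflexivity. }
  assert (I := is_RInt_periodic F _ Hper (is_RInt_sector_overlap (b - a)) (a - 1)).
  replace (a - 1 + 1) with a in I by ring.
  assert (J : is_RInt (fun al => -1 * F (-1 * al + a)) 0 1 (- sector_overlap (b - a))).
  { apply (is_RInt_comp_lin F).
    replace (-1 * 0 + a) with a by ring; replace (-1 * 1 + a) with (a - 1) by ring.
    exact (is_RInt_swap F _ _ _ I). }
  replace (sector_overlap (b - a)) with (-1 * - sector_overlap (b - a)) by ring.
  apply (is_RInt_extR (fun al => -1 * (-1 * F (-1 * al + a)))).
  - intros al _; unfold F.
    replace (-1 * al + a + (b - a)) with (b - al) by ring.
    replace (-1 * al + a) with (a - al) by ring.
    ring.
  - exact (is_RInt_scal (fun al => -1 * F (-1 * al + a)) 0 1 (-1) _ J).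
Qed.

Lemma is_RInt_sector_ind_rot a : is_RInt (fun al => sector_ind (a - al)) 0 1 g.
Proof.
  apply (is_RInt_extR (fun al => sector_ind (a - al) * sector_ind (a - al))).
  - intros al _; apply sector_ind_sq.
  - assert (I := is_RInt_sector_pair a a).
    replace (a - a) with 0 in I by ring; rewrite sector_overlap_0 in I; exact I.
Qed.

Lemma is_RInt_sector_pair_centered a b :
  is_RInt (fun al => (sector_ind (a - al) - g) * (sector_ind (b - al) - g)) 0 1
    (sector_overlap (b - a) - g * g).
Proof.
  set (ha := fun al => sector_ind (a - al)); set (hb := fun al => sector_ind (b - al)).
  assert (I1 := is_RInt_minus (fun al => ha al * hb al) (fun al => g * ha al) 0 1 _ _
                  (is_RInt_sector_pair a b) (is_RInt_scal ha 0 1 g g (is_RInt_sector_ind_rot a))).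
  assert (I2 := is_RInt_minus (fun al => ha al * hb al - g * ha al) (fun al => g * hb al) 0 1 _ _
                  I1 (is_RInt_scal hb 0 1 g g (is_RInt_sector_ind_rot b))).
  assert (I3 := is_RInt_plus (fun al => ha al * hb al - g * ha al - g * hb al) (fun _ => g * g)
                  0 1 _ _
                  I2 (is_RInt_constR 0 1 (g * g))).
  replace (sector_overlap (b - a) - g * g)
    with (sector_overlap (b - a) - g * g - g * g + (1 - 0) * (g * g)) by ring.
  apply (is_RInt_extR (fun al => ha al * hb al - g * ha al - g * hb al + g * g)); [|exact I3].
  intros al _; unfold ha, hb; ring.
Qed.

Lemma sector_mass_dev_bound u : Rabs (sector_mass_dev u) <= 1.
Proof.
  replace (sector_mass_dev u) with (Rmin (frac u) g - g * frac u)
    by (unfold sector_mass_dev, sector_mass, frac; ring).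
  destruct (frac_range u); apply Rabs_le; unfold Rmin; destruct Rle_dec; split; nra.
Qed.

Lemma sector_mass_lipschitz a b : Rabs (sector_mass b - sector_mass a) <= Rabs (b - a).
Proof.
  rewrite <- (Rmult_1_r (Rabs (b - a))).
  apply (norm_RInt_le_const_abs sector_ind a b); [|apply is_RInt_sector_ind].
  intros x _; unfold sector_ind; destruct Rle_dec; apply Rabs_le; lra.
Qed.

Lemma ex_RInt_sector_mass_dev a b : ex_RInt sector_mass_dev a b.
Proof.
  apply (@ex_RInt_continuous R_CompleteNormedModule); intros u _.
  apply continuity_pt_filterlim; intros eps Heps.
  exists (eps / 2); split; [lra|]; intros y [_ Hy]; simpl in *; unfold R_dist in *.
  unfold sector_mass_dev.
  replace (sector_mass y - g * y - (sector_mass u - g * u))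
    with ((sector_mass y - sector_mass u) - g * (y - u)) by ring.
  pose proof (sector_mass_lipschitz u y).
  pose proof (Rabs_triang (sector_mass y - sector_mass u) (- (g * (y - u)))).
  rewrite Rabs_Ropp, Rabs_mult, (Rabs_right g) in * by lra.
  assert (g * Rabs (y - u) <= Rabs (y - u)) by (pose proof (Rabs_pos (y - u)); nra).
  unfold Rminus at 1; lra.
Qed.

Lemma is_RInt_sector_mass_dev_lin c e T : c <> 0 ->
  is_RInt (fun t => sector_mass_dev (c * t + e)) 0 T (/ c * RInt sector_mass_dev e (c * T + e)).
Proof.
  intros Hc.
  apply (is_RInt_extR (fun t => / c * (c * sector_mass_dev (c * t + e)))).
  - intros t _; field; exact Hc.
  - apply (is_RInt_scal (fun t => c * sector_mass_dev (c * t + e))).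
    apply (is_RInt_comp_lin sector_mass_dev).
    rewrite Rmult_0_r, Rplus_0_l.
    exact (RInt_correct sector_mass_dev _ _ (ex_RInt_sector_mass_dev e (c * T + e))).
Qed.

Lemma sector_overlap_centered w :
  sector_overlap w - g * g = sector_mass_dev (w + g) - sector_mass_dev w.
Proof. unfold sector_overlap, sector_mass_dev; ring. Qed.

(* [sector_overlap - g^2] is a difference of two translates of the bounded periodic
   function [sector_mass_dev], so along a line of nonzero slope its integrals stay bounded. *)
Lemma sector_overlap_mean_zero c d : c <> 0 ->
  mean_ge (fun t => sector_overlap (c * t + d) - g * g) 0.
Proof.
  intros Hc.
  set (P := sector_mass_dev).
  assert (HP : forall a, Rabs (RInt P a (a + g)) <= 1).
  { intros a; eapply Rle_trans.
    - apply (abs_RInt_le_const P a (a + g) 1); [lra | apply ex_RInt_sector_mass_dev |].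
      intros; apply sector_mass_dev_bound.
    - lra. }
  exists (2 / Rabs c); intros T _.
  set (E := c * T + d).
  exists (/ c * (RInt P E (E + g) - RInt P d (d + g))); split.
  - replace (/ c * (RInt P E (E + g) - RInt P d (d + g)))
      with (/ c * RInt P (d + g) (c * T + (d + g)) - / c * RInt P d (c * T + d)).
    + apply (is_RInt_extR (fun t => P (c * t + (d + g)) - P (c * t + d))).
      * intros t _; rewrite sector_overlap_centered, Rplus_assoc; reflexivity.
      * apply (is_RInt_minus (fun t => P (c * t + (d + g))) (fun t => P (c * t + d)));
          apply is_RInt_sector_mass_dev_lin; exact Hc.
    + replace (c * T + (d + g)) with (E + g) by (unfold E; ring); fold E.
      rewrite <- (RInt_Chasles P (d + g) E (E + g)), <- (RInt_Chasles P d (d + g) E)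
        by apply ex_RInt_sector_mass_dev.
      change (plus ?x ?y) with (x + y); ring.
  - assert (Hca : 0 < Rabs c) by (apply Rabs_pos_lt; exact Hc).
    assert (HX : Rabs (RInt P E (E + g) - RInt P d (d + g)) <= 2).
    { unfold Rminus; eapply Rle_trans; [apply Rabs_triang|].
      rewrite Rabs_Ropp; pose proof (HP E); pose proof (HP d); lra. }
    assert (HcX : Rabs (/ c * (RInt P E (E + g) - RInt P d (d + g))) <= 2 / Rabs c).
    { rewrite Rabs_mult, Rabs_inv; unfold Rdiv; rewrite Rmult_comm.
      apply Rmult_le_compat_r; [left; apply Rinv_0_lt_compat; exact Hca | exact HX]. }
    pose proof (Rle_abs (- (/ c * (RInt P E (E + g) - RInt P d (d + g))))).
    rewrite Rabs_Ropp in *; lra.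
Qed.

Definition sector_dev (x : nat -> R) (n : nat) (al : R) : R :=
  sumR n (fun i => sector_ind (x i - al) - g).

Definition sector_energy (x : nat -> R) (n : nat) : R :=
  sumR n (fun i => sumR n (fun j => sector_overlap (x j - x i) - g * g)).

Lemma is_RInt_sector_dev_sq x n :
  is_RInt (fun al => sector_dev x n al * sector_dev x n al) 0 1 (sector_energy x n).
Proof.
  apply (is_RInt_extR (fun al => sumR n (fun i => sumR n (fun j =>
           (sector_ind (x i - al) - g) * (sector_ind (x j - al) - g))))).
  - intros al _; unfold sector_dev; rewrite sumR_mul; reflexivity.
  - apply is_RInt_sumR; intros i _.
    apply (is_RInt_sumR n (fun j al => (sector_ind (x i - al) - g) * (sector_ind (x j - al) - g))).
    intros j _; apply is_RInt_sector_pair_centered.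
Qed.

Lemma sector_energy_mean_ge n (s v : nat -> R) :
  (forall i j, (i < n)%nat -> (j < n)%nat -> i <> j -> v i <> v j) ->
  mean_ge (fun t => sector_energy (fun i => s i + v i * t) n) ((g - g * g) * INR n).
Proof.
  intros hv.
  set (d := fun i j : nat => if Nat.eq_dec i j then g - g * g else 0).
  replace ((g - g * g) * INR n) with (sumR n (fun i => sumR n (d i))).
  2: { rewrite <- sumR_const; apply sumR_ext; intros i Hi; apply sumR_delta, Hi. }
  apply mean_ge_sumR; intros i Hi; apply mean_ge_sumR; intros j Hj.
  apply (mean_ge_ext (fun t => sector_overlap ((v j - v i) * t + (s j - s i)) - g * g)).
  { intros t; f_equal; f_equal; ring. }
  unfold d; destruct (Nat.eq_dec i j) as [<- | Hne].
  - apply (mean_ge_ext (fun _ => g - g * g)); [|apply mean_ge_const].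
    intros t; replace ((v i - v i) * t + (s i - s i)) with 0 by ring.
    now rewrite sector_overlap_0.
  - apply sector_overlap_mean_zero.
    intros Hv; apply (hv j i Hj Hi); [congruence | lra].
Qed.

End Sector.

Lemma in_sector_frac al g y :
  (if in_sector al g (frac y) then 1 else 0) = sector_ind g (y - al).
Proof.
  unfold in_sector, sector_ind; destruct (frac_range y).
  destruct (Rle_dec 0 (frac y)); [|lra]; destruct (Rle_dec (frac y) 1); [|lra].
  rewrite frac_sub_frac; destruct Rle_dec; reflexivity.
Qed.

Lemma N_sector_le al g x n : (N_sector al g x n <= n)%nat.
Proof. unfold N_sector; rewrite <- (length_seq n 0) at 2; apply filter_length_le. Qed.

Lemma N_sector_sub al g x n : INR (N_sector al g x n) - g * INR n = sector_dev g x n al.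
Proof.
  unfold N_sector, sector_dev; rewrite length_filter_sumR, sumR_minus, sumR_const.
  f_equal; apply sumR_ext; intros; apply in_sector_frac.
Qed.

Lemma exists_sector_deviation_ge n (v s : nat -> R) g :
  (forall i j, (i < n)%nat -> (j < n)%nat -> i <> j -> v i <> v j) -> 0 <= g <= 1 ->
  exists t al, 0 <= al <= 1 /\
    sqrt ((g - g ^ 2) * INR n) <= Rabs (INR (N_sector al g (fun i => s i + v i * t) n) - g * INR n).
Proof.
  intros hv hg.
  set (x := fun t i => s i + v i * t).
  set (Q := fun k => exists t al, 0 <= al <= 1 /\ N_sector al g (x t) n = k).
  destruct (exists_ge_of_approx n Q (fun k => (INR k - g * INR n) * (INR k - g * INR n))
              ((g - g * g) * INR n)) as [k [[t [al [Hal <-]]] Hk]].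
  - intros k [t [al [_ <-]]]; apply N_sector_le.
  - intros eps Heps.
    destruct (mean_ge_exists_gt _ _ (eps / 2) (sector_energy_mean_ge g hg n s v hv) ltac:(lra))
      as [t Ht].
    destruct (is_RInt_exists_gt _ 0 1 _ (sector_energy g (x t) n - eps / 2) Rlt_0_1
                (is_RInt_sector_dev_sq g hg (x t) n) ltac:(lra)) as [al [Hal Hd]].
    exists (N_sector al g (x t) n); split; [exists t, al; split; [lra | reflexivity]|].
    cbv beta; rewrite N_sector_sub; unfold x in *; lra.
  - exists t, al; split; [exact Hal|].
    rewrite <- sqrt_Rsqr_abs; apply sqrt_le_1_alt; unfold Rsqr, x in *; cbv beta in Hk; lra.
Qed.

Definition in_interval (a b f : R) : bool :=
  if Rle_dec a f then if Rle_dec f b then true else false else false.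

Lemma length_filter_cover {A} (p q : A -> bool) (l : list A) :
  (forall x, (p x || q x)%bool = true) ->
  (length l <= length (filter p l) + length (filter q l))%nat.
Proof.
  intros Hpq; induction l as [|a l IH]; simpl; [lia|].
  pose proof (Hpq a); destruct (p a), (q a); simpl in *; [lia | lia | lia | discriminate].
Qed.

Lemma length_filter_disjoint {A} (p q : A -> bool) (l : list A) :
  (forall x, (p x && q x)%bool = false) ->
  (length (filter p l) + length (filter q l) <= length l)%nat.
Proof.
  intros Hpq; induction l as [|a l IH]; simpl; [lia|].
  pose proof (Hpq a); destruct (p a), (q a); simpl in *; [discriminate | lia | lia | lia].
Qed.

Section HalfSector.

Variables al f : R.
Hypothesis hal : 0 <= al <= 1.
Hypothesis hf : 0 <= f < 1.

Lemma in_half_sector_low : al < 1/2 -> in_sector al (1/2) f = in_interval al (al + 1/2) f.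
Proof.
  intros Hal; unfold in_sector, in_interval; rewrite frac_sub_unit by assumption.
  repeat destruct Rle_dec; try reflexivity; lra.
Qed.

Lemma in_half_sector_high_cover : 1/2 <= al ->
  (in_sector al (1/2) f || in_interval (al - 1/2) al f)%bool = true.
Proof.
  intros Hal; unfold in_sector, in_interval; rewrite frac_sub_unit by assumption.
  repeat destruct Rle_dec; try reflexivity; lra.
Qed.

Lemma in_half_sector_high_disjoint eta : 1/2 <= al -> 0 < eta ->
  (in_sector al (1/2) f && in_interval (al - 1/2 + eta) (al - eta) f)%bool = false.
Proof.
  intros Hal Heta; unfold in_sector, in_interval; rewrite frac_sub_unit by assumption.
  repeat destruct Rle_dec; try reflexivity; lra.
Qed.

End HalfSector.

Lemma bias_ge_count r n B a b : is_bias r n B -> 0 <= a -> a <= b -> b <= 1 ->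
  Rabs (INR (count_in a b r n) - INR n * (b - a)) <= B.
Proof. intros [HB _] Ha Hab Hb; apply HB; exists a, b; repeat split; assumption. Qed.

Lemma bias_ge_half_sector_deviation r n al B : 0 <= al <= 1 -> is_bias r n B ->
  Rabs (INR (N_sector al (1/2) r n) - 1/2 * INR n) <= B.
Proof.
  intros Hal HB.
  set (N := N_sector al (1/2) r n).
  set (count := fun a b => length (filter (fun i => in_interval a b (frac (r i))) (seq 0 n))).
  assert (Hcount : forall a b, count_in a b r n = count a b) by reflexivity.
  assert (Hfr := fun i => frac_range (r i)).
  destruct (Rlt_dec al (1/2)) as [Hlow | Hhigh].
  - replace (1/2 * INR n) with (INR n * (al + 1/2 - al)) by ring.
    replace N with (count_in al (al + 1/2) r n).
    + apply bias_ge_count; [exact HB | lra | lra | lra].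
    + rewrite Hcount; unfold count, N, N_sector; f_equal; apply filter_ext; intros i.
      symmetry; apply in_half_sector_low; auto.
  - assert (Hn := length_seq n 0).
    destruct (Rle_dec (INR N) (1/2 * INR n)).
    + assert (Hcover : (n <= N + count_in (al - 1/2) al r n)%nat).
      { rewrite Hcount; unfold count, N, N_sector; rewrite <- Hn at 1.
        apply length_filter_cover; intros i; apply in_half_sector_high_cover; auto; lra. }
      apply le_INR in Hcover; rewrite plus_INR in Hcover.
      pose proof (bias_ge_count r n B (al - 1/2) al HB ltac:(lra) ltac:(lra) ltac:(lra)).
      pose proof (Rle_abs (INR (count_in (al - 1/2) al r n) - INR n * (al - (al - 1/2)))).
      rewrite Rabs_left1 by lra; lra.
    + apply Rle_plus_epsilon; intros eps Heps.
      pose proof (pos_INR n) as Hn0.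
      set (eta := Rmin (1/4) (eps / (2 * (INR n + 1)))).
      assert (Heta : 0 < eta <= 1/4).
      { split; [apply Rmin_pos; [lra | apply Rdiv_lt_0_compat; lra] | apply Rmin_l]. }
      assert (Heta_eps : 2 * (INR n + 1) * eta <= eps).
      { assert (Hle : eta <= eps / (2 * (INR n + 1))) by apply Rmin_r.
        apply (Rmult_le_compat_l (2 * (INR n + 1))) in Hle; [|lra].
        replace (2 * (INR n + 1) * (eps / (2 * (INR n + 1)))) with eps in Hle by (field; lra).
        exact Hle. }
      assert (Hdisj : (N + count_in (al - 1/2 + eta) (al - eta) r n <= n)%nat).
      { rewrite Hcount; unfold count, N, N_sector; rewrite <- Hn at 3.
        apply length_filter_disjoint; intros i; apply in_half_sector_high_disjoint; auto; lra. }
      apply le_INR in Hdisj; rewrite plus_INR in Hdisj.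
      pose proof (bias_ge_count r n B (al - 1/2 + eta) (al - eta) HB
                    ltac:(lra) ltac:(lra) ltac:(lra)).
      pose proof (Rle_abs (- (INR (count_in (al - 1/2 + eta) (al - eta) r n)
                               - INR n * (al - eta - (al - 1/2 + eta))))).
      rewrite Rabs_Ropp in *; rewrite Rabs_right by lra.
      nra.
Qed.

Theorem theorem3p2 (n : nat) (v s : nat -> R) (gamma : R)
  (hv : forall i j, (i < n)%nat -> (j < n)%nat -> i <> j -> v i <> v j)
  (hs : forall i, (i < n)%nat -> 0 <= s i /\ s i < 1)
  (hg : 0 <= gamma /\ gamma <= 1) :
  (exists t alpha, 0 <= alpha /\ alpha <= 1 /\
     Rabs (INR (N_sector alpha gamma (fun i => s i + v i * t) n) - gamma * INR n)
       >= sqrt ((gamma - gamma ^ 2) * INR n))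
  /\
  (exists t, forall B, is_bias (fun i => s i + v i * t) n B -> B >= sqrt (INR n) / 2).
Proof.
  split.
  - destruct (exists_sector_deviation_ge n v s gamma hv hg) as [t [al [Hal Hdev]]].
    exists t, al; repeat split; try apply Rle_ge; tauto.
  - destruct (exists_sector_deviation_ge n v s (1/2) hv ltac:(lra)) as [t [al [Hal Hdev]]].
    exists t; intros B HB; apply Rle_ge.
    replace (sqrt (INR n) / 2) with (sqrt ((1/2 - (1/2) ^ 2) * INR n)).
    + eapply Rle_trans; [exact Hdev | apply bias_ge_half_sector_deviation; assumption].
    + replace ((1/2 - (1/2) ^ 2) * INR n) with (Rsqr (1/2) * INR n) by (unfold Rsqr; field).
      rewrite sqrt_mult, sqrt_Rsqr by (try apply Rle_0_sqr; try apply pos_INR; lra); field.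
Qed.
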